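(* For each $t\in\{0,1,\dots,T\}$ and every state $(\bm{x},k)=((x_1,\dots,x_N),k)\in\mathbb{N}_0^{N+1}$, $$V^N_t(\bm{x},k)=\sum_{i=1}^N \tilde V^{N,i}_t(x_i,k).$$
   Context: Fix integers $N\ge1$, $T\ge1$, reals $\alpha_0,\beta_0>0$, and for each $i\in\mathcal{N}=\{1,\dots,N\}$ an integer failure threshold $\xi_i\ge1$ and costs $0<c_p^i<c_u^i$. $\mathbb{N}_0=\{0,1,2,\dots\}$. For real $r>0$ and $p\in(0,1)$, $NB(r,p)$ is the distribution on $\mathbb{N}_0$ with $P(n)=\frac{\Gamma(n+r)}{\Gamma(r)n!}p^r(1-p)^n$; $NB(0,p)$ is the point mass at $0$. For $t\in\{0,\dots,T\}$ let $p_t=\frac{\beta_0+Nt}{\beta_0+Nt+1}$. For $x\in\mathbb{N}_0$ let $\mathbb{I}_i(x)=1$ if $x\ge\xi_i$ and $0$ otherwise; the admissible actions for system $i$ at level $x$ are $\mathcal{A}_i(x)=\{0,1\}$ if $x<\xi_i$ and $\{1\}$ if $x\ge\xi_i$ ($a=1$ means replacement, $a=0$ means no action). Let $C_i(x,a)=a(1-\mathbb{I}_i(x))c_p^i+\mathbb{I}_i(x)c_u^i$. Original MDP: state $(\bm{x},k)\in\mathbb{N}_0^{N+1}$, actions $\bm{a}\in\prod_i\mathcal{A}_i(x_i)$, cost $C(\bm{x},\bm{a})=\sum_i C_i(x_i,a_i)$. $V^N_T(\bm{x},k)=\sum_i\mathbb{I}_i(x_i)c_u^i$, and for $t=T-1,\dots,0$: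 $V^N_t(\bm{x},k)=\min_{\bm{a}}\{C(\bm{x},\bm{a})+\mathbb{E}[V^N_{t+1}(\bm{x}'+\bm{Z},k+\sum_i Z_i)]\}$, where $Z_1,\dots,Z_N$ are i.i.d. $NB(\alpha_0+k,p_t)$ and $x'_i=x_i$ if $a_i=0$, $x'_i=0$ if $a_i=1$. Alternative (per-system) MDP: state $(x,k)\in\mathbb{N}_0^2$, $\tilde V^{N,i}_T(x,k)=\mathbb{I}_i(x)c_u^i$, and for $t=T-1,\dots,0$: $\tilde V^{N,i}_t(x,k)=\min_{a\in\mathcal{A}_i(x)}\{C_i(x,a)+\mathbb{E}[\tilde V^{N,i}_{t+1}(x(1-a)+Z,\;k+Z+K)]\}$, where $Z\sim NB(\alpha_0+k,p_t)$ and $K\sim NB((N-1)(\alpha_0+k),p_t)$ are independent. *)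

From HB Require Import structures.
From mathcomp Require Import all_boot all_order all_algebra.
From mathcomp Require Import all_classical all_reals all_analysis.
Set Implicit Arguments. Unset Strict Implicit. Unset Printing Implicit Defensive.
Import Order.TTheory GRing.Theory Num.Theory.
Local Open Scope classical_set_scope.
Local Open Scope ring_scope.

Section Model.
Variable R : realType.

(* Negative binomial pmf NB(r,p) at n :
   Gamma(n+r)/(Gamma(r) n!) p^r (1-p)^n, where
   Gamma(n+r)/Gamma(r) = r (r+1) ... (r+n-1) (rising factorial).
   For r = 0 this is the point mass at 0 (since 0 `^ 0 = 1). *)
Definition nb_pmf (r p : R) (n : nat) : R :=
  (\prod_(j < n) (r + j%:R)) / (n`!)%:R * (p `^ r) * (1 - p) ^+ n.

Definition p_of (N : nat) (beta0 : R) (t : nat) : R :=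
  (beta0 + (N * t)%:R) / (beta0 + (N * t)%:R + 1).

Definition Ind (xi : nat) (x : nat) : bool := (xi <= x)%N.

Definition admissible (xi : nat) (x : nat) (a : bool) : bool := Ind xi x ==> a.

Definition Ci (xi : nat) (cp cu : R) (x : nat) (a : bool) : R :=
  (a && ~~ Ind xi x)%:R * cp + (Ind xi x)%:R * cu.

Local Open Scope ereal_scope.

Section Original.
Variables (N T : nat) (alpha0 beta0 : R) (xi : 'I_N -> nat) (cp cu : 'I_N -> R).

Definition orig_terminal (x : 'I_N -> nat) : \bar R :=
  (\sum_(i < N) ((Ind (xi i) (x i))%:R * cu i))%:E.

Definition orig_cost (x : 'I_N -> nat) (a : {ffun 'I_N -> bool}) : R :=
  \sum_(i < N) Ci (xi i) (cp i) (cu i) (x i) (a i).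

(* E[f(Z)] with Z_1..Z_N i.i.d. NB(r,p): sum over all outcomes in N_0^N
   of the joint pmf times f (nonnegative extended-real sum). *)
Definition E_iid (r p : R) (f : {ffun 'I_N -> nat} -> \bar R) : \bar R :=
  \esum_(z in [set: {ffun 'I_N -> nat}])
     ((\prod_(i < N) nb_pmf r p (z i))%:E * f z).

(* Vaux m t : value with m remaining backward steps at time t;
   V^N_t := Vaux (T - t) t. *)
Fixpoint orig_aux (m t : nat) (x : 'I_N -> nat) (k : nat) : \bar R :=
  match m with
  | 0 => orig_terminal x
  | m'.+1 =>
    \big[Order.min/+oo]_(a : {ffun 'I_N -> bool} |
                          [forall i, admissible (xi i) (x i) (a i)])
      ((orig_cost x a)%:E +
       E_iid (alpha0 + k%:R) (p_of N beta0 t)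
         (fun z => orig_aux m' t.+1
                     (fun i => (if a i then 0 else x i) + z i)%N
                     (k + \sum_(i < N) z i)%N))
  end.

Definition V_orig (t : nat) (x : 'I_N -> nat) (k : nat) : \bar R :=
  orig_aux (T - t) t x k.

Section Alt.
Variable i : 'I_N.

(* E[f(Z,K)], Z ~ NB(r,p), K ~ NB((N-1) r, p) independent *)
Definition E_pair (r p : R) (f : nat * nat -> \bar R) : \bar R :=
  \esum_(zk in [set: nat * nat])
     ((nb_pmf r p zk.1 * nb_pmf ((N - 1)%:R * r) p zk.2)%:E * f zk).

Fixpoint alt_aux (m t : nat) (x : nat) (k : nat) : \bar R :=
  match m with
  | 0 => ((Ind (xi i) x)%:R * cu i)%:E
  | m'.+1 =>
    \big[Order.min/+oo]_(a : bool | admissible (xi i) x a)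
      ((Ci (xi i) (cp i) (cu i) x a)%:E +
       E_pair (alpha0 + k%:R) (p_of N beta0 t)
         (fun zk => alt_aux m' t.+1 ((if a then 0 else x) + zk.1)%N
                                  (k + zk.1 + zk.2)%N))
  end.

Definition V_alt (t : nat) (x : nat) (k : nat) : \bar R :=
  alt_aux (T - t) t x k.

End Alt.
End Original.
End Model.

(* If the per-system identity holds at
   time t+1, the continuation value inside V^N_t is a sum over i of functions
   of (Z_i, sum_j Z_j) only.  For Z_1..Z_N i.i.d. NB(r,p), the pair
   (Z_i, sum_(j <> i) Z_j) is distributed as (NB(r,p), NB((N-1) r, p)),
   independent, because negative binomials with a common p convolve by adding
   shapes (Chu-Vandermonde for rising factorials).  So the expectation splits
   into the per-system expectations; the immediate cost is separable too, and
   the minimum of a separable sum over the product of the admissible action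
   sets is the sum of the per-system minima. *)

From HB Require Import structures.
From mathcomp Require Import all_boot all_order all_algebra.
From mathcomp Require Import all_classical all_reals all_analysis.
From mathcomp Require Import ring lra.
Set Implicit Arguments. Unset Strict Implicit. Unset Printing Implicit Defensive.
Import Order.TTheory GRing.Theory Num.Theory.
Local Open Scope classical_set_scope.
Local Open Scope ring_scope.

Section Multichoose.
Variable R : numFieldType.

Definition multichoose (r : R) (n : nat) : R :=
  (\prod_(j < n) (r + j%:R)) / (n`!)%:R.

Lemma multichoose0 r : multichoose r 0 = 1.
Proof. by rewrite /multichoose big_ord0 fact0 divr1. Qed.

Lemma multichooseS r n :
  multichoose r n.+1 = multichoose r n * (r + n%:R) / n.+1%:R.
Proof.
rewrite /multichoose big_ord_recr /= factS natrM.
have fact_neq0 : (n`!)%:R != 0 :> R by rewrite pnatr_eq0 -lt0n fact_gt0.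
have Sn_neq0 : 1 + n%:R != 0 :> R by rewrite addrC natr1 pnatr_eq0.
by field; rewrite Sn_neq0 fact_neq0.
Qed.

(* Chu-Vandermonde for rising factorials; both sides satisfy the recurrence
   [(n+1) S_(n+1) = (x + y + n) S_n], the left one after splitting the weight
   [n+1 = a + (n+1-a)] inside the sum. *)
Lemma multichoose_conv x y n :
  \sum_(a < n.+1) multichoose x a * multichoose y (n - a) = multichoose (x + y) n.
Proof.
elim: n => [|n IH].
  by rewrite big_ord_recl big_ord0 /= !multichoose0 mulr1 addr0.
set S := \sum_(a < n.+2) _.
have Sn_neq0 : (n.+1)%:R != 0 :> R by rewrite pnatr_eq0.
suff rec : S * n.+1%:R =
    (x + y + n%:R) * \sum_(a < n.+1) multichoose x a * multichoose y (n - a).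
  apply: (mulIf Sn_neq0); rewrite rec IH multichooseS.
  by field; rewrite addrC natr1.
have split_weight : S * n.+1%:R =
    \sum_(a < n.+2) a%:R * (multichoose x a * multichoose y (n.+1 - a))
  + \sum_(a < n.+2) (n.+1 - a)%:R * (multichoose x a * multichoose y (n.+1 - a)).
  rewrite -big_split /= mulr_suml; apply: eq_bigr => a _.
  have le_aSn : (a <= n.+1)%N by rewrite -ltnS.
  by rewrite -mulrDl -natrD subnKC //; ring.
rewrite split_weight big_ord_recl /= (_ : (nat_of_ord (@ord0 n.+1))%:R = 0) //.
rewrite mul0r add0r [\sum_(a < n.+2) _]big_ord_recr /=.
rewrite (_ : (n.+1 - @ord_max n.+1)%:R = 0) ?subnn // mul0r addr0.
rewrite mulr_sumr -big_split /=; apply: eq_bigr => a _.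
rewrite /bump /= add1n subSS.
have le_an : (a <= n)%N by rewrite -ltnS.
rewrite (subSn le_an) !multichooseS natrB //.
have Sa_neq0 : (a.+1)%:R != 0 :> R by rewrite pnatr_eq0.
have Sna_neq0 : ((n - a).+1)%:R != 0 :> R by rewrite pnatr_eq0.
by field; rewrite !(addrC 1) !natr1 Sa_neq0 Sna_neq0.
Qed.

End Multichoose.

Section NegativeBinomial.
Variable R : realType.
Implicit Types (r p : R) (n : nat).

Lemma nb_pmfE r p n : nb_pmf r p n = multichoose r n * p `^ r * (1 - p) ^+ n.
Proof. by []. Qed.

Lemma nb_pmf_ge0 r p n : 0 <= r -> 0 < p -> p < 1 -> 0 <= nb_pmf r p n.
Proof.
move=> r_ge0 p_gt0 p_lt1; rewrite nb_pmfE; apply: mulr_ge0.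
  apply: mulr_ge0; last exact: powR_ge0.
  by apply: divr_ge0 => //; apply: prodr_ge0 => j _; apply: addr_ge0.
by apply: exprn_ge0; lra.
Qed.

Lemma nb_pmf_shape0 p n : nb_pmf 0 p n = (n == 0)%:R.
Proof.
case: n => [|n]; first by rewrite nb_pmfE multichoose0 powRr0 expr0 !mulr1.
by rewrite nb_pmfE /multichoose big_ord_recl /= add0r !mul0r.
Qed.

Lemma nb_pmf_conv r1 r2 p c : 0 < p ->
  \sum_(a < c.+1) nb_pmf r1 p a * nb_pmf r2 p (c - a) = nb_pmf (r1 + r2) p c.
Proof.
move=> p_gt0; rewrite nb_pmfE -multichoose_conv powRD; last first.
  by apply/implyP => _; rewrite gt_eqF.
rewrite !mulr_suml; apply: eq_bigr => a _; rewrite !nb_pmfE.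
have le_ac : (a <= c)%N by rewrite -ltnS.
have split_pow : (1 - p) ^+ c = (1 - p) ^+ a * (1 - p) ^+ (c - a).
  by rewrite -exprD subnKC.
by rewrite split_pow; ring.
Qed.

End NegativeBinomial.

Section ExtendedSums.
Variable R : realType.
Local Open Scope ereal_scope.

Lemma esum_setX (T1 T2 : choiceType) (F : T1 * T2 -> \bar R) :
  (forall q, 0 <= F q) ->
  \esum_(q in [set: T1 * T2]) F q =
  \esum_(a in [set: T1]) \esum_(b in [set: T2]) F (a, b).
Proof.
move=> F_ge0; rewrite esum_esum //.
rewrite (_ : [set: T1] `*`` (fun=> [set: T2]) = [set: T1 * T2]).
  by apply: eq_esum => -[a b].
by apply/seteqP; split => -[a b].
Qed.

Lemma esum_antidiagonal (h : nat -> nat -> \bar R) : (forall a b, 0 <= h a b) ->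
  \esum_(q in [set: nat * nat]) h q.1 q.2 =
  \esum_(c in [set: nat]) \sum_(a < c.+1) h a (c - a)%N.
Proof.
move=> h_ge0.
rewrite (eq_esum (I := [set: nat])
  (b := fun c => \esum_(a in `I_c.+1) h a (c - a)%N)); last first.
  move=> c _; rewrite esum_fset ?finite_II //.
  by rewrite (fsbig_ord _ _ (fun a => h a (c - a)%N)).
rewrite esum_esum // [RHS](reindex_esum [set: nat * nat]
  ([set: nat] `*`` (fun c => `I_c.+1)) (fun q => (q.1 + q.2, q.1)%N)).
  by apply: eq_esum => -[a b] _ /=; rewrite addKn.
split.
- by move=> [a b] _ /=; split => //=; rewrite ltnS leq_addr.
- by move=> [a b] [a' b'] _ _ /= [] /[swap] <- /addnI ->.
- move=> [c a] [_ /=]; rewrite ltnS => le_ac.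
  by exists (a, c - a)%N => //=; rewrite subnKC.
Qed.

Definition ffun_ins n (i : 'I_n.+1) (a : nat) (w : {ffun 'I_n -> nat}) :
  {ffun 'I_n.+1 -> nat} := [ffun j => if unlift i j is Some j' then w j' else a].

Lemma ffun_ins_at n (i : 'I_n.+1) a w : ffun_ins i a w i = a.
Proof. by rewrite ffunE unlift_none. Qed.

Lemma ffun_ins_lift n (i : 'I_n.+1) a w j : ffun_ins i a w (lift i j) = w j.
Proof. by rewrite ffunE liftK. Qed.

Lemma esum_ffun_ins n (i : 'I_n.+1) (F : {ffun 'I_n.+1 -> nat} -> \bar R) :
  \esum_(z in [set: {ffun 'I_n.+1 -> nat}]) F z =
  \esum_(q in [set: nat * {ffun 'I_n -> nat}]) F (ffun_ins i q.1 q.2).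
Proof.
rewrite (reindex_esum [set: nat * {ffun 'I_n -> nat}] [set: {ffun 'I_n.+1 -> nat}]
  (fun q => ffun_ins i q.1 q.2)) //.
split => //.
- move=> [a w] [a' w'] _ _ /= ins_eq.
  have <- : a = a' by rewrite -(ffun_ins_at i a w) ins_eq ffun_ins_at.
  congr pair; apply/ffunP => j.
  by rewrite -(ffun_ins_lift i a w) ins_eq ffun_ins_lift.
- move=> z _; exists (z i, [ffun j => z (lift i j)]) => //=.
  apply/ffunP => j; rewrite ffunE; case: unliftP => [j' ->|->] //.
  by rewrite ffunE.
Qed.

Lemma prod_ffun_ins n (i : 'I_n.+1) a w (f : nat -> R) :
  (\prod_(j < n.+1) f (ffun_ins i a w j) = f a * \prod_(j < n) f (w j))%R.
Proof.
rewrite (bigD1_ord i) //= ffun_ins_at; congr (_ * _)%R.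
by apply: eq_bigr => j _; rewrite ffun_ins_lift.
Qed.

Lemma sum_ffun_ins n (i : 'I_n.+1) a w :
  (\sum_(j < n.+1) ffun_ins i a w j = a + \sum_(j < n) w j)%N.
Proof.
rewrite (bigD1_ord i) //= ffun_ins_at; congr (_ + _)%N.
by apply: eq_bigr => j _; rewrite ffun_ins_lift.
Qed.

Lemma setT_ffun_ord0 : [set: {ffun 'I_0 -> nat}] = [set [ffun=> 0%N]].
Proof. by apply/seteqP; split => z // _; apply/ffunP => -[]. Qed.

End ExtendedSums.

Section IidExpectation.
Variable R : realType.
Local Open Scope ereal_scope.
Variables (r p : R).
Hypotheses (r_ge0 : (0 <= r)%R) (p_gt0 : (0 < p)%R) (p_lt1 : (p < 1)%R).

Let nb_ge0 s b : (0 <= s)%R -> 0 <= (nb_pmf s p b)%:E.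
Proof. by move=> s_ge0; rewrite lee_fin nb_pmf_ge0. Qed.

Let nb_prod_ge0 n (z : {ffun 'I_n -> nat}) :
  0 <= (\prod_(j < n) nb_pmf r p (z j))%:E.
Proof. by rewrite lee_fin; apply: prodr_ge0 => j _; exact: nb_pmf_ge0. Qed.

Let nb_pair_ge0 n a b : (0 <= nb_pmf r p a * nb_pmf (n%:R * r) p b)%R.
Proof. by rewrite mulr_ge0 ?nb_pmf_ge0 ?mulr_ge0. Qed.

Lemma esum_nb_pmf_shape0 (G : nat -> \bar R) : (forall b, 0 <= G b) ->
  \esum_(b in [set: nat]) (nb_pmf 0 p b)%:E * G b = G 0%N.
Proof.
move=> G_ge0; rewrite (esumID [set 0%N]); last first.
  by move=> b _; apply: mule_ge0 => //; rewrite nb_pmf_shape0 lee_fin; case: (b == 0)%N.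
rewrite setTI esum_set1; last by rewrite nb_pmf_shape0 mul1e.
rewrite nb_pmf_shape0 mul1e esum1 ?adde0 // => b [_ /eqP] /negPf.
by rewrite nb_pmf_shape0 => ->; rewrite mul0e.
Qed.

Lemma esum_iid_nb_sum n (G : nat -> \bar R) : (forall b, 0 <= G b) ->
  \esum_(z in [set: {ffun 'I_n -> nat}])
     (\prod_(j < n) nb_pmf r p (z j))%:E * G (\sum_(j < n) z j)%N =
  \esum_(b in [set: nat]) (nb_pmf (n%:R * r) p b)%:E * G b.
Proof.
elim: n G => [|n IH] G G_ge0.
  rewrite setT_ffun_ord0 esum_set1; last by rewrite big_ord0 mul1e.
  by rewrite !big_ord0 mul1e mul0r esum_nb_pmf_shape0.
have nbG_ge0 a b : 0 <= (nb_pmf r p a)%:E * G b by rewrite mule_ge0 ?nb_ge0.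
rewrite (esum_ffun_ins ord0) esum_setX /=; last first.
  by move=> q; rewrite mule_ge0 ?nb_prod_ge0.
under eq_esum => a _.
  under eq_esum => w _ do rewrite prod_ffun_ins sum_ffun_ins EFinM muleAC muleC.
  rewrite (IH (fun s => (nb_pmf r p a)%:E * G (a + s)%N)) //.
over.
transitivity (\esum_(q in [set: nat * nat])
    (nb_pmf r p q.1 * nb_pmf (n%:R * r) p q.2)%:E * G (q.1 + q.2)%N).
  rewrite esum_setX /=; last by move=> q; rewrite mule_ge0 ?lee_fin.
  by apply: eq_esum => a _; apply: eq_esum => b _; rewrite EFinM muleCA muleA.
rewrite (@esum_antidiagonal _
  (fun a b => (nb_pmf r p a * nb_pmf (n%:R * r) p b)%:E * G (a + b)%N)); last first.
  by move=> a b; rewrite mule_ge0 ?lee_fin ?nb_pair_ge0.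
apply: eq_esum => c _.
under eq_bigr => a _ do rewrite (subnKC (ltnSE (ltn_ord a))).
rewrite -ge0_sume_distrl; last by move=> a _; rewrite lee_fin nb_pair_ge0.
by rewrite sumEFin nb_pmf_conv // -[n.+1]addn1 natrD mulrDl mul1r addrC.
Qed.

Lemma E_iid_coord_sum N (i : 'I_N) (g : nat -> nat -> \bar R) :
  (forall a b, 0 <= g a b) ->
  E_iid r p (fun z => g (z i) (\sum_(j < N) z j)%N) =
  E_pair N r p (fun q => g q.1 (q.1 + q.2)%N).
Proof.
case: N i => [[]//|n] i g_ge0; rewrite /E_iid /E_pair subn1 /=.
rewrite (esum_ffun_ins i) esum_setX /=; last first.
  by move=> q; rewrite mule_ge0 ?nb_prod_ge0.
under eq_esum => a _.
  under eq_esum => w _ do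
    rewrite prod_ffun_ins sum_ffun_ins ffun_ins_at EFinM muleAC muleC.
  rewrite (@esum_iid_nb_sum n (fun s => (nb_pmf r p a)%:E * g a (a + s)%N));
    last by move=> b; rewrite mule_ge0 ?nb_ge0.
over.
rewrite esum_setX /=; last by move=> q; rewrite mule_ge0 ?lee_fin ?nb_pair_ge0.
by apply: eq_esum => a _; apply: eq_esum => b _; rewrite EFinM muleCA muleA.
Qed.

Lemma E_iid_sum N (f : 'I_N -> {ffun 'I_N -> nat} -> \bar R) :
  (forall i z, 0 <= f i z) ->
  E_iid r p (fun z => \sum_(i < N) f i z) = \sum_(i < N) E_iid r p (f i).
Proof.
move=> f_ge0; rewrite /E_iid.
under eq_esum => z _ do rewrite ge0_sume_distrr //.
by rewrite esum_sum // => z i _ _; rewrite mule_ge0.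
Qed.

End IidExpectation.

Lemma bigmin_ffun_sum (R : realDomainType) (I B : finType) (b0 : B)
    (P : I -> pred B) (f : I -> B -> \bar R) :
  (forall i, P i b0) ->
  (\big[Order.min/+oo]_(a : {ffun I -> B} | [forall i, P i (a i)])
      \sum_(i : I) f i (a i)
  = \sum_(i : I) \big[Order.min/+oo]_(b | P i b) f i b)%E.
Proof.
move=> P_b0; apply/eqP; rewrite eq_le; apply/andP; split.
  pose argmin i :=
    @eq_bigmin _ _ B +oo%E b0 (P i) (f i) (P_b0 i) (fun _ _ => leey _).
  pose a := [ffun i => s2val (argmin i)].
  have Pa : [forall i, P i (a i)].
    by apply/forallP => i; rewrite ffunE; have := s2valP (argmin i).
  apply: le_trans (bigmin_le_cond _ _ Pa) _; apply: lee_sum => i _.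
  by rewrite ffunE; case: (argmin i) => /= b _ ->.
apply: le_bigmin => [|a /forallP Pa]; first exact: leey.
by apply: lee_sum => i _; exact: bigmin_le_cond.
Qed.

Lemma p_of_gt0 (R : realType) N (beta0 : R) t : 0 < beta0 -> 0 < p_of N beta0 t.
Proof.
move=> beta0_gt0; have num_gt0 : 0 < beta0 + (N * t)%:R by apply: ltr_wpDr.
by apply: divr_gt0 => //; lra.
Qed.

Lemma p_of_lt1 (R : realType) N (beta0 : R) t : 0 < beta0 -> p_of N beta0 t < 1.
Proof.
move=> beta0_gt0; have num_gt0 : 0 < beta0 + (N * t)%:R by apply: ltr_wpDr.
by rewrite /p_of ltr_pdivrMr ?mul1r; lra.
Qed.

Lemma Ci_ge0 (R : realType) xi (cp cu : R) x a :
  0 <= cp -> 0 <= cu -> 0 <= Ci xi cp cu x a.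
Proof. by move=> cp_ge0 cu_ge0; rewrite /Ci addr_ge0 ?mulr_ge0. Qed.

Lemma E_pair_ge0 (R : realType) N (r p : R) f :
  0 <= r -> 0 < p -> p < 1 -> (forall q, (0 <= f q)%E) -> (0 <= E_pair N r p f)%E.
Proof.
move=> r_ge0 p_gt0 p_lt1 f_ge0; apply: esum_ge0 => q _.
by rewrite mule_ge0 // lee_fin mulr_ge0 ?nb_pmf_ge0 ?mulr_ge0.
Qed.

Section Decomposition.
Variables (R : realType) (N : nat) (alpha0 beta0 : R) (xi : 'I_N -> nat).
Variables (cp cu : 'I_N -> R).
Hypotheses (alpha0_ge0 : 0 <= alpha0) (beta0_gt0 : 0 < beta0).
Hypotheses (cp_ge0 : forall i, 0 <= cp i) (cu_ge0 : forall i, 0 <= cu i).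
Local Open Scope ereal_scope.

Lemma alt_aux_ge0 i m t x k : 0 <= alt_aux alpha0 beta0 xi cp cu i m t x k.
Proof.
elim: m t x k => [|m IH] t x k /=; first by rewrite lee_fin mulr_ge0.
apply: le_bigmin => [|a _]; first exact: leey.
by rewrite adde_ge0 ?lee_fin ?Ci_ge0 ?E_pair_ge0 ?addr_ge0 ?p_of_gt0 ?p_of_lt1.
Qed.

Lemma orig_aux_sum m t x k :
  orig_aux alpha0 beta0 xi cp cu m t x k =
  \sum_(i < N) alt_aux alpha0 beta0 xi cp cu i m t (x i) k.
Proof.
elim: m t x k => [|m IH] t x k /=; first by rewrite /orig_terminal sumEFin.
set r := (alpha0 + k%:R)%R; set p := p_of N beta0 t.
have r_ge0 : (0 <= r)%R by apply: addr_ge0.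
have [p_gt0 p_lt1] := (p_of_gt0 N t beta0_gt0, p_of_lt1 N t beta0_gt0).
pose g i (b : bool) := (Ci (xi i) (cp i) (cu i) (x i) b)%:E +
  E_pair N r p (fun q => alt_aux alpha0 beta0 xi cp cu i m t.+1
                           ((if b then 0 else x i) + q.1)%N (k + q.1 + q.2)%N).
have separable a : (orig_cost xi cp cu x a)%:E + E_iid r p (fun z =>
      orig_aux alpha0 beta0 xi cp cu m t.+1
        (fun i => (if a i then 0 else x i) + z i)%N (k + \sum_(i < N) z i)%N)
    = \sum_(i < N) g i (a i).
  rewrite big_split /= -sumEFin; congr (_ + _).
  under [X in E_iid _ _ X]funext => z do rewrite IH.
  rewrite (E_iid_sum r_ge0 p_gt0 p_lt1); last by move=> *; exact: alt_aux_ge0.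
  apply: eq_bigr => i _.
  rewrite (E_iid_coord_sum r_ge0 p_gt0 p_lt1 i (g := fun u s =>
    alt_aux alpha0 beta0 xi cp cu i m t.+1 ((if a i then 0 else x i) + u)%N
      (k + s)%N)); last by move=> *; exact: alt_aux_ge0.
  by apply: eq_esum => q _; rewrite addnA.
rewrite (eq_bigr _ (fun a _ => separable a)).
rewrite (bigmin_ffun_sum (b0 := true) (P := fun i => admissible (xi i) (x i)) g) //.
by move=> i; rewrite /admissible implybT.
Qed.

End Decomposition.

Theorem theorem1 (R : realType) (N T : nat) (alpha0 beta0 : R)
    (xi : 'I_N -> nat) (cp cu : 'I_N -> R) :
  (1 <= N)%N -> (1 <= T)%N -> 0 < alpha0 -> 0 < beta0 ->
  (forall i, (1 <= xi i)%N) ->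
  (forall i, 0 < cp i /\ cp i < cu i) ->
  forall (t : nat), (t <= T)%N ->
  forall (x : 'I_N -> nat) (k : nat),
    V_orig T alpha0 beta0 xi cp cu t x k =
    (\sum_(i < N) V_alt T alpha0 beta0 xi cp cu i t (x i) k)%E.
Proof.
move=> _ _ alpha0_gt0 beta0_gt0 _ costs t _ x k.
have cp_ge0 i : 0 <= cp i by have [] := costs i; lra.
have cu_ge0 i : 0 <= cu i by have [] := costs i; lra.
exact: orig_aux_sum (ltW alpha0_gt0) beta0_gt0 cp_ge0 cu_ge0 _ _ _ _.
Qed.
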